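(* Let $X$ be a vector space and let $Y_\rho$ be a $\rho$-complete modular space associated with a convex modular $\rho$. Let $\varepsilon>0$ and let $\phi: X\to Y_\rho$ be a mapping with $\phi(0)=0$ and $$\rho\big(\phi(x+y-z)+\phi(x+z-y)+\phi(y+z-x)-\phi(x-y)-\phi(x-z)-\phi(z-y)-\phi(x)-\phi(y)-\phi(z)\big) \le \varepsilon$$ for all $x,y,z\in X$. Then there exists a unique quadratic mapping $h: X\to Y_\rho$ such that $$\rho(\phi(x)-h(x)) \le \frac{\varepsilon}{3} \quad\text{for all } x\in X.$$
   Context: A convex modular on a vector space $Y$ is a functional $\rho: Y\to[0,\infty)$ such that for all $u,v\in Y$: (i) $\rho(u)=0$ iff $u=0$; (ii) $\rho(\lambda u)=\rho(u)$ for every scalar $\lambda$ with $|\lambda|=1$; (iii) $\rho(a u+b v)\le a\rho(u)+b\rho(v)$ whenever $a,b\ge 0$ and $a+b=1$. The associated modular space is $Y_\rho=\{u\in Y: \rho(\lambda u)\to 0 \text{ as } \lambda\to 0\}$. A sequence $\{u_n\}$ in $Y_\rho$ is $\rho$-convergent to $u$ if $\rho(u_n-u)\to 0$; it is $\rho$-Cauchy if $\rho(u_n-u_m)\to0$ as $n,m\to\infty$; $Y_\rho$ is $\rho$-complete if every $\rho$-Cauchy sequence in $Y_\rho$ is $\rho$-convergent. A mapping $h: X\to Y_\rho$ is quadratic if $h(x+y)+h(x-y)=2h(x)+2h(y)$ for all $x,y\in X$. *)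

From HB Require Import structures.
From mathcomp Require Import all_boot all_order all_algebra.
From mathcomp Require Import all_classical all_reals topology normedtype sequences.
Set Implicit Arguments. Unset Strict Implicit. Unset Printing Implicit Defensive.
Import Order.TTheory GRing.Theory Num.Theory.
Import numFieldNormedType.Exports.
Local Open Scope ring_scope.
Local Open Scope classical_set_scope.

Definition convex_modular (R : realType) (Y : lmodType R) (rho : Y -> R) : Prop :=
  (forall u, 0 <= rho u) /\
  (forall u, rho u = 0 <-> u = 0) /\
  (forall (l : R) u, `|l| = 1 -> rho (l *: u) = rho u) /\
  (forall (a b : R) u v, 0 <= a -> 0 <= b -> a + b = 1 ->
     rho (a *: u + b *: v) <= a * rho u + b * rho v).

Definition modular_space (R : realType) (Y : lmodType R) (rho : Y -> R) (u : Y) : Prop :=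
  (fun l : R => rho (l *: u)) @ (0 : R)^' --> (0 : R).

Definition rho_convergent (R : realType) (Y : lmodType R) (rho : Y -> R)
  (u : nat -> Y) (v : Y) : Prop :=
  (fun n => rho (u n - v)) @ \oo --> (0 : R).

Definition rho_Cauchy (R : realType) (Y : lmodType R) (rho : Y -> R)
  (u : nat -> Y) : Prop :=
  forall e : R, 0 < e -> exists N : nat, forall n m : nat,
    (N <= n)%N -> (N <= m)%N -> rho (u n - u m) < e.

Definition rho_complete (R : realType) (Y : lmodType R) (rho : Y -> R) : Prop :=
  forall u : nat -> Y, (forall n, modular_space rho (u n)) -> rho_Cauchy rho u ->
    exists v, modular_space rho v /\ rho_convergent rho u v.

Definition quadratic (R : realType) (X Y : lmodType R) (h : X -> Y) : Prop :=
  forall x y, h (x + y) + h (x - y) = 2 *: h x + 2 *: h y.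

From mathcomp Require Import all_boot all_order all_algebra.
From mathcomp Require Import all_classical all_reals topology normedtype sequences.
From mathcomp Require Import ring lra.
Import Order.TTheory GRing.Theory Num.Theory.
Import numFieldNormedType.Exports.
Local Open Scope ring_scope.
Local Open Scope classical_set_scope.

(* Taking (x, y, z) = (2x, x, x) gives rho (phi (2x) - 4 phi x) <= eps, and the
   quadratic defect phi (x + y) + phi (x - y) - 2 phi x - 2 phi y is an alternating
   sum of three instances of the hypothesis.  A convex modular satisfies no
   triangle inequality, only rho (sum a_i u_i) <= sum a_i rho u_i when the weights
   sum to at most 1, so every estimate is arranged as such a combination.  By
   induction rho (c (phi x - 4^-n phi (2^n x))) <= c eps / 3 for 0 <= c <= 3, so the
   Hyers sequence 4^-n phi (2^n x) is rho-Cauchy with a limit h.  A small enough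
   multiple of the quadratic defect of h is a subconvex combination of terms whose
   modulars tend to 0, hence h is quadratic; then h (2x) = 4 h x yields the bound
   eps / 3, and a quadratic k satisfies k x = 4^-n k (2^n x), which forces two
   quadratic maps close to phi to coincide. *)

Section LinearCombination.
Variables (R : pzRingType) (V : lmodType R) (us : seq V).

Definition lcomb (a : nat -> R) : V := \sum_(i < size us) a i *: us`_i.

Lemma lcombD a b : lcomb a + lcomb b = lcomb (fun i => a i + b i).
Proof. by rewrite -big_split; apply: eq_bigr => i _; rewrite scalerDl. Qed.

Lemma lcombN a : - lcomb a = lcomb (fun i => - a i).
Proof. by rewrite -sumrN; apply: eq_bigr => i _; rewrite scaleNr. Qed.

Lemma lcombZ k a : k *: lcomb a = lcomb (fun i => k * a i).
Proof. by rewrite scaler_sumr; apply: eq_bigr => i _; rewrite scalerA. Qed.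

Lemma lcomb_nth k : (k < size us)%N ->
  us`_k = lcomb (fun i => if i == k then 1 else 0).
Proof.
move=> lt_k; rewrite /lcomb (bigD1 (Ordinal lt_k)) //= eqxx scale1r big1 ?addr0 //.
by move=> i /negbTE; rewrite -val_eqE /= => ->; rewrite scale0r.
Qed.

Lemma eq_lcomb a b : (forall i, a i = b i) -> lcomb a = lcomb b.
Proof. by move=> ab; apply: eq_bigr => i _; rewrite ab. Qed.

End LinearCombination.

(* [lmod_identity us] proves an identity between R-linear combinations of the
   vectors listed in [us]: both sides are rewritten as [lcomb us _], and the
   coefficients of each vector are compared with [field]. *)
Ltac lcomb_atoms U l k :=
  lazymatch l with
  | ?a :: ?l' =>
      rewrite -[a]/(U`_k) (@lcomb_nth _ _ U k erefl);
      let k' := constr:(S k) in lcomb_atoms U l' k'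
  | [::] => idtac
  end.

Ltac lcomb_coeffs l :=
  lazymatch l with
  | _ :: ?l' => case; [by rewrite /=; field | lcomb_coeffs l']
  | [::] => by move=> ? /=; field
  end.

Tactic Notation "lmod_identity" constr(us) :=
  let U := fresh "U" in
  pose U := us; lcomb_atoms U us 0%N;
  rewrite ?(lcombN, lcombD, lcombZ); apply: eq_lcomb; lcomb_coeffs us.

Lemma ler_of_cvg0 {R : realType} (a b : R) (c : nat -> R) :
  (forall n, a <= b + c n) -> c @ \oo --> 0 -> a <= b.
Proof.
move=> le_abc c0; have bc_b : (fun n => b + c n) @ \oo --> b.
  by rewrite -[b in _ --> b]addr0; apply: cvgD c0; exact: cvg_cst.
by apply: (cvgr_to_ge bc_b); exact: nearW.
Qed.

Lemma cvg_geometric4 {R : realType} (a : R) :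
  (fun n => a * (4^-1)^+n) @ \oo --> 0.
Proof. by apply: (cvg_geometric a); rewrite ger0_norm; lra. Qed.

Lemma quarter_expr_ge0 {R : realType} n : 0 <= (4^-1 : R)^+n.
Proof. by apply: exprn_ge0; lra. Qed.

Lemma quarter_expr_le1 {R : realType} n : (4^-1 : R)^+n <= 1.
Proof. by apply: exprn_ile1; lra. Qed.

Section ConvexModular.
Context {R : realType} {Y : lmodType R} {rho : Y -> R} (rho_convex : convex_modular rho).

Lemma rho_ge0 u : 0 <= rho u.
Proof. by case: rho_convex. Qed.

Lemma rho_eq0 u : rho u = 0 -> u = 0.
Proof. by case: rho_convex => _ [/(_ u)[]]. Qed.

Lemma rho0 : rho 0 = 0.
Proof. by case: rho_convex => _ [/(_ 0)[_ ->]]. Qed.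

Lemma rhoN u : rho (- u) = rho u.
Proof.
case: rho_convex => _ [_ [rho_unit _]].
by rewrite -scaleN1r rho_unit // normrN normr1.
Qed.

Lemma rhoZ_le c u : 0 <= c -> c <= 1 -> rho (c *: u) <= c * rho u.
Proof.
case: rho_convex => _ [_ [_ rho_conv]] c_ge0 c_le1.
have := rho_conv c (1 - c) u 0 c_ge0; rewrite subr_ge0 addrC subrK.
by rewrite scaler0 addr0 rho0 mulr0 addr0; apply.
Qed.

Lemma rho_subconvex a b u v : 0 <= a -> 0 <= b -> a + b <= 1 ->
  rho (a *: u + b *: v) <= a * rho u + b * rho v.
Proof.
move=> a_ge0 b_ge0 ab_le1; have [ab0|ab_neq0] := eqVneq (a + b) 0.
  move: ab0 => /eqP; rewrite paddr_eq0 // => /andP[/eqP-> /eqP->].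
  by rewrite !scale0r !mul0r !addr0 rho0.
have ab_gt0 : 0 < a + b by rewrite lt_def ab_neq0 addr_ge0.
case: rho_convex => _ [_ [_ rho_conv]].
have -> : a *: u + b *: v = (a + b) *: ((a / (a + b)) *: u + (b / (a + b)) *: v).
  by rewrite scalerDr !scalerA !mulrA ![(a + b) * _]mulrC !mulfK.
apply: le_trans (rhoZ_le _ _ (ltW ab_gt0) ab_le1) _.
apply: le_trans (ler_wpM2l (ltW ab_gt0) (rho_conv _ _ _ _ _ _ _)) _.
- by rewrite divr_ge0 // ltW.
- by rewrite divr_ge0 // ltW.
- by rewrite -mulrDl divff.
by rewrite mulrDr !mulrA ![(a + b) * _]mulrC !mulfK.
Qed.

Lemma rho_sum_le (s : seq (R * Y)) :
  all (fun p => 0 <= p.1) s -> \sum_(p <- s) p.1 <= 1 ->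
  rho (\sum_(p <- s) p.1 *: p.2) <= \sum_(p <- s) p.1 * rho p.2.
Proof.
move=> s_ge0 s_le1.
(* Generalised to a total weight k so that the tail can be renormalised by its own weight. *)
suff scaled k : 0 < k -> \sum_(p <- s) p.1 <= k ->
    rho (k^-1 *: \sum_(p <- s) p.1 *: p.2) <= k^-1 * \sum_(p <- s) p.1 * rho p.2.
  by have := scaled 1 ltr01 s_le1; rewrite invr1 scale1r mul1r.
elim: s s_ge0 k {s_le1} => [_ k _ _|[a u] t IH]; first by rewrite !big_nil scaler0 rho0 mulr0.
rewrite /= !big_cons /= => /andP[a_ge0 t_ge0] k k_gt0 le_k.
have S_ge0 : 0 <= \sum_(p <- t) p.1 by rewrite big_seq sumr_ge0 // => p /(allP t_ge0).
have [S0|S_neq0] := eqVneq (\sum_(p <- t) p.1) 0.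
  have t0 p : p \in t -> p.1 = 0.
    move=> pt; apply/eqP; move: S0 => /eqP.
    rewrite big_seq psumr_eq0 => [/allP/(_ p pt)|q]; first by rewrite pt.
    exact: (allP t_ge0 q).
  rewrite [X in a *: u + X]big_seq [X in _ <= _ * (_ + X)]big_seq.
  rewrite !big1 => [|p /t0->|p /t0->]; rewrite ?mul0r ?scale0r ?addr0 //.
  rewrite scalerA mulrA; apply: rhoZ_le; first by rewrite mulr_ge0 // invr_ge0 ltW.
  by rewrite mulrC ler_pdivrMr // mul1r; move: le_k; rewrite S0 addr0.
have S_gt0 : 0 < \sum_(p <- t) p.1 by rewrite lt_def S_neq0.
set S := \sum_(p <- t) p.1 in le_k S_gt0 *.
have -> : k^-1 *: (a *: u + \sum_(p <- t) p.1 *: p.2) =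
    (a / k) *: u + (S / k) *: (S^-1 *: \sum_(p <- t) p.1 *: p.2).
  by rewrite scalerDr !scalerA [k^-1 * a]mulrC mulrAC divff ?gt_eqF // mul1r.
apply: le_trans (rho_subconvex _ _ _ _ _ _ _) _.
- by rewrite divr_ge0 // ltW.
- by rewrite divr_ge0 // ltW.
- by rewrite -mulrDl ler_pdivrMr // mul1r.
rewrite mulrDr mulrA [k^-1 * a]mulrC lerD2l.
apply: le_trans (ler_wpM2l _ (IH t_ge0 _ S_gt0 (lexx _))) _; first by rewrite divr_ge0 // ltW.
by rewrite mulrA [S / k * S^-1]mulrAC divff ?gt_eqF // mul1r.
Qed.

Lemma rho_half_sub_le u v w :
  rho (2^-1 *: (u - v)) <= 2^-1 * rho (w - u) + 2^-1 * rho (w - v).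
Proof.
have -> : 2^-1 *: (u - v) = 2^-1 *: - (w - u) + 2^-1 *: (w - v).
  by lmod_identity [:: u; v; w].
by rewrite -(rhoN (w - u)); apply: rho_subconvex; lra.
Qed.

Lemma modular_spaceZ c u : 0 <= c -> c <= 1 ->
  modular_space rho u -> modular_space rho (c *: u).
Proof.
move=> c_ge0 c_le1 u_mod; apply: (squeeze_cvgr _ (cvg_cst 0) u_mod).
apply: nearW => l /=; rewrite rho_ge0 scalerA mulrC -scalerA.
apply: le_trans (rhoZ_le _ _ c_ge0 c_le1) _.
by rewrite -[X in _ <= X]mul1r ler_wpM2r ?rho_ge0.
Qed.

Lemma rho_le_cvg0_eq0 u (b : nat -> R) :
  (forall n, rho u <= b n) -> b @ \oo --> 0 -> u = 0.
Proof.
move=> le_ub b0; apply: rho_eq0; apply/eqP; rewrite eq_le rho_ge0 andbT.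
by apply: ler_of_cvg0 b0 => n; rewrite add0r.
Qed.

End ConvexModular.

Section QuadraticMaps.
Context {R : realType} {X Y : lmodType R}.
Implicit Types (f k : X -> Y) (x y : X).

Definition qdefect f x y : Y := f (x + y) + f (x - y) - 2 *: f x - 2 *: f y.

Definition hyers f (n : nat) x : Y := (4^-1)^+n *: f (2^+n *: x).

Lemma quadraticP k : quadratic k <-> forall x y, qdefect k x y = 0.
Proof.
rewrite /qdefect; split=> [kq x y | k0 x y]; first by rewrite kq -addrA -opprD subrr.
by apply/eqP; rewrite -subr_eq0 opprD addrA k0.
Qed.

Lemma hyers0 f x : hyers f 0 x = f x.
Proof. by rewrite /hyers !expr0 !scale1r. Qed.

Lemma hyersD f m n x : hyers f (m + n) x = (4^-1)^+m *: hyers f n (2^+m *: x).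
Proof. by rewrite /hyers scalerA -exprD scalerA -exprD addnC. Qed.

Lemma hyersS f n x : hyers f n.+1 x = 4^-1 *: hyers f n (2 *: x).
Proof. by rewrite -add1n hyersD !expr1. Qed.

Lemma qdefect_hyers f n x y :
  qdefect (hyers f n) x y = (4^-1)^+n *: qdefect f (2^+n *: x) (2^+n *: y).
Proof.
rewrite /qdefect /hyers scalerDr scalerBr.
set a := 2^+n *: x; set b := 2^+n *: y.
by lmod_identity [:: f (a + b); f (a - b); f a; f b].
Qed.

Lemma quadratic0 k : quadratic k -> k 0 = 0.
Proof.
move=> kq; have := kq 0 0; rewrite addr0 subr0 => k00.
have -> : k 0 = (- 2^-1) *: (k 0 + k 0 - (2 *: k 0 + 2 *: k 0)) by lmod_identity [:: k 0].
by rewrite k00 subrr scaler0.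
Qed.

Lemma quadratic_double k x : quadratic k -> k (2 *: x) = 4 *: k x.
Proof.
move=> kq; rewrite scaler_nat mulr2n -[k (x + x)]addr0 -(quadratic0 _ kq) -(subrr x) kq.
by lmod_identity [:: k x].
Qed.

Lemma hyers_quadratic k n x : quadratic k -> hyers k n x = k x.
Proof.
move=> kq; elim: n x => [|n IH] x; first exact: hyers0.
by rewrite hyersS IH quadratic_double // scalerA mulVf ?scale1r // pnatr_eq0.
Qed.

End QuadraticMaps.

Lemma quadratic_near_unique {R : realType} {X Y : lmodType R} {rho : Y -> R}
    {f k1 k2 : X -> Y} {delta : R} :
  convex_modular rho -> quadratic k1 -> quadratic k2 ->
  (forall x, rho (f x - k1 x) <= delta) -> (forall x, rho (f x - k2 x) <= delta) ->
  k1 = k2.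
Proof.
move=> rho_convex k1q k2q near1 near2; apply/funext => x; apply/eqP; rewrite -subr_eq0.
apply/eqP/(rho_le_cvg0_eq0 rho_convex _ (fun n => delta / 2 * (4^-1)^+n)) => [n|];
  last exact: cvg_geometric4.
have q_ge0 := @quarter_expr_ge0 R n; have q_le1 := @quarter_expr_le1 R n.
set y := 2^+n.+1 *: x.
have -> : k1 x - k2 x = (2^-1 * (4^-1)^+n) *: (2^-1 *: (k1 y - k2 y)).
  rewrite -(hyers_quadratic k1 n.+1 x k1q) -(hyers_quadratic k2 n.+1 x k2q) /hyers -/y exprS.
  by lmod_identity [:: k1 y; k2 y].
apply: le_trans (rhoZ_le rho_convex _ _ _ _) _; [nra..|].
by have := rho_half_sub_le rho_convex (k1 y) (k2 y) (f y); have := near1 y; have := near2 y; nra.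
Qed.

Section HyersApproximation.
Context {R : realType} {X Y : lmodType R} {rho : Y -> R} (rho_convex : convex_modular rho).
Context {f : X -> Y} {delta : R}.
Hypothesis rho_double : forall x, rho (f (2 *: x) - 4 *: f x) <= delta.

Let delta_ge0 : 0 <= delta.
Proof. exact: le_trans (rho_ge0 rho_convex _) (rho_double 0). Qed.

Lemma rho_sub_hyers_le n x c : 0 <= c -> c <= 3 ->
  rho (c *: (f x - hyers f n x)) <= c * (delta / 3).
Proof.
(* The induction hypothesis is used with c = 3, hence the range of c. *)
elim: n x c => [|n IH] x c c_ge0 c_le3.
  by rewrite hyers0 subrr scaler0 rho0 // mulr_ge0 // divr_ge0.
have -> : c *: (f x - hyers f n.+1 x) =
    (c / 4) *: - (f (2 *: x) - 4 *: f x) + (c / 12) *: (3 *: (f (2 *: x) - hyers f n (2 *: x))).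
  by rewrite hyersS; lmod_identity [:: f x; f (2 *: x); hyers f n (2 *: x)].
apply: le_trans (rho_subconvex rho_convex _ _ _ _ _ _ _) _; [lra..|].
have := IH (2 *: x) 3 ltac:(lra) ltac:(lra); have := rho_double x.
rewrite rhoN //; nra.
Qed.

Lemma rho_hyers_sub_le m n x : (m <= n)%N ->
  rho (hyers f m x - hyers f n x) <= (4^-1)^+m * (delta / 3).
Proof.
move=> le_mn; rewrite -(subnKC le_mn) hyersD {1}/hyers -scalerBr.
apply: rho_sub_hyers_le; first exact: quarter_expr_ge0.
by apply: le_trans (quarter_expr_le1 m) _; lra.
Qed.

Lemma hyers_rho_Cauchy x : rho_Cauchy rho (hyers f ^~ x).
Proof.
move=> e e_gt0; have [N _ geoN] := cvgr0_norm_lt _ (cvg_geometric4 (delta / 3)) _ e_gt0.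
exists N; suff le_e n m : (N <= n)%N -> (n <= m)%N -> rho (hyers f n x - hyers f m x) < e.
  move=> n m Nn Nm; have [le_nm|/ltnW le_mn] := leqP n m; first exact: le_e.
  by rewrite -opprB rhoN //; apply: le_e => //; apply: leq_trans le_mn.
move=> Nn le_nm; apply: le_lt_trans (rho_hyers_sub_le _ _ x le_nm) _.
apply: le_lt_trans (geoN N (leqnn N)); rewrite mulrC (le_trans _ (ler_norm _)) //.
by rewrite ler_wpM2l ?divr_ge0 // ler_wiXn2l //; lra.
Qed.

Lemma hyers_cvg_exists : rho_complete rho -> (forall x, modular_space rho (f x)) ->
  exists h : X -> Y, forall x,
    modular_space rho (h x) /\ rho_convergent rho (hyers f ^~ x) (h x).
Proof.
move=> complete f_mod.
have lim_x x : exists v, modular_space rho v /\ rho_convergent rho (hyers f ^~ x) v.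
  apply: complete (hyers_rho_Cauchy x) => n.
  exact: modular_spaceZ (quarter_expr_ge0 n) (quarter_expr_le1 n) (f_mod _).
by have [h hP] := choice lim_x; exists h.
Qed.

Context {h : X -> Y}.
Hypothesis hyers_cvg : forall x, rho_convergent rho (hyers f ^~ x) (h x).

Lemma rho_sub_hyers_lim_le x : quadratic h -> rho (f x - h x) <= delta / 3.
Proof.
move=> hq; pose c n := 4^-1 * rho (hyers f n (2 *: x) - h (2 *: x)).
apply: (@ler_of_cvg0 _ _ _ c) => [n|]; last first.
  by rewrite -[0](mulr0 4^-1); apply: cvgMl_tmp; exact: hyers_cvg.
have -> : f x - h x = (3 / 4) *: ((4 / 3) *: (f x - hyers f n.+1 x))
    + 4^-1 *: (hyers f n (2 *: x) - h (2 *: x)).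
  by rewrite hyersS (quadratic_double h x hq); lmod_identity [:: f x; hyers f n (2 *: x); h x].
apply: le_trans (rho_subconvex rho_convex _ _ _ _ _ _ _) _; [lra..|].
by have := rho_sub_hyers_le n.+1 x (4 / 3) ltac:(lra) ltac:(lra); rewrite /c; lra.
Qed.

Hypothesis rho_qdefect : forall x y, rho (3^-1 *: qdefect f x y) <= delta.

Lemma hyers_lim_quadratic : quadratic h.
Proof.
apply/quadraticP => x y; pose d n z := hyers f n z - h z.
pose q n : R := (4^-1)^+n; pose Qf n := qdefect f (2^+n *: x) (2^+n *: y).
(* The factor 9^-1 makes the weights below sum to 1/3 + 2/9 + 4/9 = 1. *)
have split n : 9^-1 *: qdefect h x y = \sum_(p <- [:: (3^-1, q n *: (3^-1 *: Qf n));
    (9^-1, - d n (x + y)); (9^-1, - d n (x - y)); (2 / 9, d n x); (2 / 9, d n y)])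
    p.1 *: p.2.
  have -> : q n *: (3^-1 *: Qf n) = 3^-1 *: qdefect (hyers f n) x y.
    by rewrite qdefect_hyers -/(q n) -/(Qf n); lmod_identity [:: Qf n].
  rewrite !big_cons big_nil /= addr0 /qdefect /d.
  lmod_identity [:: h (x + y); h (x - y); h x; h y;
    hyers f n (x + y); hyers f n (x - y); hyers f n x; hyers f n y].
pose b n := delta / 3 * q n + 9^-1 * rho (d n (x + y)) + 9^-1 * rho (d n (x - y))
  + 2 / 9 * rho (d n x) + 2 / 9 * rho (d n y).
suff /eqP : 9^-1 *: qdefect h x y = 0 by rewrite scaler_eq0 invr_eq0 pnatr_eq0 => /eqP.
apply: (@rho_le_cvg0_eq0 _ _ _ rho_convex _ b) => [n|].
  rewrite (split n); apply: le_trans (rho_sum_le rho_convex _ _ _) _.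
  - by rewrite /= !andbT; repeat (apply/andP; split); lra.
  - by rewrite !big_cons big_nil /=; lra.
  have Qf_le : rho (q n *: (3^-1 *: Qf n)) <= q n * delta.
    apply: le_trans (rhoZ_le rho_convex _ _ _ _) _; [exact: quarter_expr_ge0|exact: quarter_expr_le1|].
    by apply: ler_wpM2l; [exact: quarter_expr_ge0 | exact: rho_qdefect].
  by rewrite !big_cons big_nil /= addr0 !rhoN // /b; lra.
have dcvg k z : (fun n => k * rho (d n z)) @ \oo --> 0.
  by rewrite -(mulr0 k); apply: cvgMl_tmp; exact: hyers_cvg.
suff : b @ \oo --> 0 + 0 + 0 + 0 + 0 by rewrite !addr0.
exact: cvgD (cvgD (cvgD (cvgD (cvg_geometric4 (delta / 3)) (dcvg 9^-1 (x + y)))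
  (dcvg 9^-1 (x - y))) (dcvg (2 / 9) x)) (dcvg (2 / 9) y).
Qed.

End HyersApproximation.

Definition qdefect3 {R : realType} {X Y : lmodType R} (phi : X -> Y) (x y z : X) : Y :=
  phi (x + y - z) + phi (x + z - y) + phi (y + z - x)
  - phi (x - y) - phi (x - z) - phi (z - y) - phi x - phi y - phi z.

Section ThreeVariableDefect.
Context {R : realType} {X Y : lmodType R} (phi : X -> Y) (phi0 : phi 0 = 0).

Lemma qdefect3_double x : qdefect3 phi (2 *: x) x x = phi (2 *: x) - 4 *: phi x.
Proof.
have two : x + x = 2 *: x by rewrite scaler_nat mulr2n.
have twoK : 2 *: x - x = x by rewrite -two addrK.
rewrite /qdefect3 addrK twoK two !subrr phi0 !subr0 addr0.
by lmod_identity [:: phi (2 *: x); phi x].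
Qed.

Lemma qdefect_qdefect3 x y :
  qdefect phi x y = qdefect3 phi x y 0 - qdefect3 phi (x - y) 0 0 + qdefect3 phi y 0 0.
Proof.
rewrite /qdefect /qdefect3 !subr0 !addr0 !sub0r [- (x - y)]opprB phi0 ?subr0 ?sub0r.
by lmod_identity [:: phi (x + y); phi (x - y); phi (y - x); phi (- y); phi x; phi y].
Qed.

Lemma rho_qdefect_le (rho : Y -> R) (eps : R) : convex_modular rho ->
  (forall x y z, rho (qdefect3 phi x y z) <= eps) ->
  forall x y, rho (3^-1 *: qdefect phi x y) <= eps.
Proof.
move=> rho_convex le_eps x y; rewrite qdefect_qdefect3.
set E1 := qdefect3 phi x y 0; set E2 := qdefect3 phi (x - y) 0 0; set E3 := qdefect3 phi y 0 0.
have -> : 3^-1 *: (E1 - E2 + E3) =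
    \sum_(p <- [:: (3^-1, E1); (3^-1, - E2); (3^-1, E3)]) p.1 *: p.2.
  by rewrite !big_cons big_nil /= addr0; lmod_identity [:: E1; E2; E3].
apply: le_trans (rho_sum_le rho_convex _ _ _) _.
- by rewrite /= !andbT; repeat (apply/andP; split); lra.
- by rewrite !big_cons big_nil /=; lra.
rewrite !big_cons big_nil /= addr0 rhoN //.
by have := le_eps x y 0; have := le_eps (x - y) 0 0; have := le_eps y 0 0; lra.
Qed.

End ThreeVariableDefect.

Theorem corollary2p2 (R : realType) (X Y : lmodType R) (rho : Y -> R)
  (eps : R) (phi : X -> Y) :
  convex_modular rho ->
  rho_complete rho ->
  0 < eps ->
  (forall x, modular_space rho (phi x)) ->
  phi 0 = 0 ->
  (forall x y z : X,
     rho (phi (x + y - z) + phi (x + z - y) + phi (y + z - x)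
          - phi (x - y) - phi (x - z) - phi (z - y)
          - phi x - phi y - phi z) <= eps) ->
  exists h : X -> Y,
    ((forall x, modular_space rho (h x)) /\ quadratic h /\
     (forall x, rho (phi x - h x) <= eps / 3)) /\
    (forall h' : X -> Y,
       (forall x, modular_space rho (h' x)) -> quadratic h' ->
       (forall x, rho (phi x - h' x) <= eps / 3) -> h' = h).
Proof.
move=> rho_convex complete _ phi_mod phi0 le_eps.
have rho_double x : rho (phi (2 *: x) - 4 *: phi x) <= eps.
  by rewrite -(qdefect3_double _ phi0); exact: le_eps.
have [h h_lim] := hyers_cvg_exists rho_convex rho_double complete phi_mod.
have h_cvg x := (h_lim x).2.
have hq := hyers_lim_quadratic rho_convex h_cvg (rho_qdefect_le _ phi0 _ _ rho_convex le_eps).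
have near_h x := rho_sub_hyers_lim_le rho_convex rho_double h_cvg x hq.
exists h; split; first by split=> [x|]; [exact: (h_lim x).1 | split].
by move=> k _ kq near_k; exact: quadratic_near_unique rho_convex kq hq near_k near_h.
Qed.
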